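(* Let $\mathbb{G}$ be a linear array (finite set of integers with $\min\mathbb{G}=0$) whose difference coarray $\mathbb{D}$ is hole-free, and let $M=|\mathbb{U}|=|\mathbb{D}|$. For every $r\ge 1$, the difference coarray $\mathbb{D}_r$ of the fractal array $\mathbb{F}_r$ generated by $\mathbb{G}$ is hole-free, and $$\mathbb{D}_r=\left[-\tfrac{M^r-1}{2},\tfrac{M^r-1}{2}\right]\cap\mathbb{Z}.$$
   Context: A linear array is a finite set $\mathbb{G}\subset\mathbb{Z}$ of sensor positions, normalized so that $\min\mathbb{G}=0$. Its difference coarray is $\mathbb{D}=\{n_1-n_2: n_1,n_2\in\mathbb{G}\}$. For $m\ge 0$ let $\mathbb{U}_m=\{-m,\dots,-1,0,1,\dots,m\}$; the central ULA $\mathbb{U}$ of $\mathbb{D}$ is the largest $\mathbb{U}_m$ contained in $\mathbb{D}$ (so $|\mathbb{U}|$ is odd). $\mathbb{D}$ is hole-free if $\mathbb{D}=\mathbb{U}$. For sets $A,B\subset\mathbb{Z}$, $A+B=\{a+b:a\in A,b\in B\}$ and $A+t=\{a+t:a\in A\}$. With $M=|\mathbb{U}|$, the fractal array generated by $\mathbb{G}$ is defined by $\mathbb{F}_0=\{0\}$ and $\mathbb{F}_{r+1}=\bigcup_{n\in\mathbb{G}}(\mathbb{F}_r+nM^r)$ for $r\ge 0$ (so $\mathbb{F}_1=\mathbb{G}$). *)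

(* Arrays are finite sets of integers, represented as seq int
   (only membership matters; duplicates are irrelevant). *)
From mathcomp Require Import all_boot all_order all_algebra.
Set Implicit Arguments. Unset Strict Implicit. Unset Printing Implicit Defensive.
Import Order.TTheory GRing.Theory Num.Theory.
Local Open Scope ring_scope.

Definition linear_array (G : seq int) : Prop :=
  (0 \in G) /\ (forall g, g \in G -> 0 <= g).

Definition coarray (G : seq int) : seq int := [seq a - b | a <- G, b <- G].

Definition ula (m : nat) : seq int :=
  [seq (i%:Z - m%:Z) | i <- iota 0 (2 * m + 1)].

Definition ula_in_coarray (G : seq int) (m : nat) : bool :=
  all (fun z => z \in coarray G) (ula m).

(* Radius of the central ULA: the largest m with U_m contained in D.
   Any such m satisfies m <= 2 * sum |g|, so the search bound is safe. *)
Definition cula_rad (G : seq int) : nat :=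
  \max_(m < (2 * \sum_(g <- G) `|g|%N).+1 | ula_in_coarray G m) m.

Definition central_ula (G : seq int) : seq int := ula (cula_rad G).

Definition hole_free (G : seq int) : Prop := coarray G =i central_ula G.

Fixpoint fractal (G : seq int) (M : nat) (r : nat) : seq int :=
  match r with
  | 0 => [:: 0]
  | r'.+1 => [seq f + n * (M ^ r')%:Z | n <- G, f <- fractal G M r']
  end.

(* The coarray of F_(r+1) is D_r + M^r D: a difference of two elements
   f1 + n1 M^r and f2 + n2 M^r splits into a difference of F_r and a difference
   of G.  If D = [-m, m] with M = 2m + 1 and D_r = [-K, K] with M^r = 2K + 1,
   then D_r + M^r D is exactly [-(K + m M^r), K + m M^r] (balanced base-M^r
   digits), and K + m M^r = (M^(r+1) - 1)/2.  Hole-freeness of D_r follows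
   because the central ULA of an interval [-K, K] is the interval itself. *)
From mathcomp Require Import all_boot all_order all_algebra zify ring.
Import Order.TTheory GRing.Theory Num.Theory.
Local Open Scope ring_scope.

Lemma mem_coarray (s : seq int) z :
  reflect (exists a b, [/\ a \in s, b \in s & z = a - b]) (z \in coarray s).
Proof.
apply: (iffP allpairsP) => [[[a b] /= [ha hb ->]]|[a [b [ha hb ->]]]].
  by exists a, b.
by exists (a, b).
Qed.

Lemma mem_fractalS (G : seq int) M r x :
  reflect (exists n f, [/\ n \in G, f \in fractal G M r & x = f + n * (M ^ r)%:Z])
          (x \in fractal G M r.+1).
Proof.
apply: (iffP allpairsP) => [[[a b] /= [ha hb ->]]|[a [b [ha hb ->]]]].
  by exists a, b.
by exists (a, b).
Qed.

Lemma mem_ula m z : (z \in ula m) = (- m%:Z <= z <= m%:Z).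
Proof.
apply/mapP/idP.
  by case=> i; rewrite mem_iota add0n => /andP[_ hi] ->; lia.
move=> hz; exists (absz (z + m%:Z)); last lia.
by rewrite mem_iota; lia.
Qed.

Lemma coarray_fractalS (G : seq int) M r z :
  reflect (exists d e, [/\ d \in coarray (fractal G M r), e \in coarray G
                         & z = d + e * (M ^ r)%:Z])
          (z \in coarray (fractal G M r.+1)).
Proof.
have split_diff (a b c d p : int) : a + c * p - (b + d * p) = (a - b) + (c - d) * p.
  by ring.
apply: (iffP (mem_coarray _ _)).
  case=> a [b [/mem_fractalS [n1 [f1 [hn1 hf1 ->]]]
              /mem_fractalS [n2 [f2 [hn2 hf2 ->]]] ->]].
  exists (f1 - f2), (n1 - n2); rewrite split_diff.
  by split=> //; apply/mem_coarray; [exists f1, f2 | exists n1, n2].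
case=> d [e [/mem_coarray [f1 [f2 [hf1 hf2 ->]]]
             /mem_coarray [n1 [n2 [hn1 hn2 ->]]] ->]].
exists (f1 + n1 * (M ^ r)%:Z), (f2 + n2 * (M ^ r)%:Z); rewrite split_diff.
by split=> //; apply/mem_fractalS; [exists n1, f1 | exists n2, f2].
Qed.

Lemma balanced_digits (m K P : nat) z : P = (2 * K + 1)%N ->
  (- (K + m * P)%N%:Z <= z <= (K + m * P)%N%:Z) <->
  exists d e, [/\ - K%:Z <= d <= K%:Z, - m%:Z <= e <= m%:Z & z = d + e * P%:Z].
Proof.
move=> hP; split; last by case=> d [e [hd he ->]]; nia.
move=> hz; pose n := absz (z + (K + m * P)%N%:Z).
have hn : n%:Z = z + (K + m * P)%N%:Z by rewrite /n; lia.
have hq : (n %/ P < 2 * m + 1)%N by rewrite ltn_divLR; lia.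
have hr : (n %% P < P)%N by rewrite ltn_mod; lia.
have he := divn_eq n P.
by exists ((n %% P)%:Z - K%:Z), ((n %/ P)%:Z - m%:Z); split; nia.
Qed.

Lemma odd_half_predE {x : nat} : odd x -> x = (2 * (x.-1)./2 + 1)%N.
Proof.
move=> ox; have hx := odd_double_half x; rewrite ox in hx.
have -> : x.-1 = (x./2).*2 by rewrite -{1}hx.
by rewrite doubleK -{1}hx -mul2n add1n addn1.
Qed.

Lemma odd_exp_double_succ m r : odd ((2 * m + 1) ^ r)%N.
Proof. by rewrite oddX addn1 /= mul2n odd_double orbT. Qed.

Lemma half_pred_expS m r :
  ((((2 * m + 1) ^ r.+1).-1)./2 = (((2 * m + 1) ^ r).-1)./2 + m * (2 * m + 1) ^ r)%N.
Proof.
have := odd_half_predE (odd_exp_double_succ m r).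
have := odd_half_predE (odd_exp_double_succ m r.+1).
rewrite !expnS; move: ((2 * m + 1) * (2 * m + 1) ^ r).-1./2 => B.
by move: ((2 * m + 1) ^ r).-1./2 ((2 * m + 1) ^ r)%N => A P; nia.
Qed.

Lemma coarray_fractal (G : seq int) m r z :
  coarray G =i ula m ->
  let K := (((2 * m + 1) ^ r).-1)./2%N in
  (z \in coarray (fractal G (2 * m + 1)%N r)) = (- K%:Z <= z <= K%:Z).
Proof.
move=> hG; elim: r z => [|r IH] z /=.
  by rewrite /coarray /= inE subr0; apply/eqP/idP => [->|]; lia.
have digits := balanced_digits m _ _ z (odd_half_predE (odd_exp_double_succ m r)).
rewrite half_pred_expS; apply/coarray_fractalS/idP.
  case=> d [e [hd he hz]]; rewrite hG mem_ula in he; rewrite IH in hd.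
  by apply/digits; exists d, e.
by case/digits => d [e [hd he ->]]; exists d, e; rewrite IH hG mem_ula.
Qed.

Lemma absz_le_sum {s : seq int} {x : int} : x \in s -> (absz x <= \sum_(g <- s) absz g)%N.
Proof. by elim: s => //= y s IH; rewrite big_cons inE => /orP[/eqP->|/IH]; lia. Qed.

Lemma cula_rad_interval {s : seq int} {K : nat} :
  (forall z, z \in coarray s = (- K%:Z <= z <= K%:Z)) -> cula_rad s = K.
Proof.
move=> hs.
have ula_in k : ula_in_coarray s k = (k <= K)%N.
  apply/allP/idP => [h | hk z]; last by rewrite mem_ula hs; lia.
  by have := h k%:Z; rewrite mem_ula hs; lia.
have K_bound : (K < (2 * \sum_(g <- s) absz g).+1)%N.
  have : K%:Z \in coarray s by rewrite hs; lia.
  case/mem_coarray => a [b [ha hb hab]].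
  by have := absz_le_sum ha; have := absz_le_sum hb; lia.
apply/eqP; rewrite eqn_leq; apply/andP; split.
  by apply/bigmax_leqP => i; rewrite ula_in.
by apply: (@leq_bigmax_cond _ _ _ (Ordinal K_bound)); rewrite ula_in.
Qed.

Theorem theorem1 (G : seq int) :
  linear_array G -> hole_free G ->
  let M := size (central_ula G) in
  forall r : nat, (1 <= r)%N ->
    hole_free (fractal G M r) /\
    coarray (fractal G M r) =i
      [pred z : int | (- ((((M ^ r).-1)./2)%:Z) <= z) && (z <= (((M ^ r).-1)./2)%:Z)].
Proof.
move=> _ hG M r _.
have hM : M = (2 * cula_rad G + 1)%N by rewrite /M /central_ula /ula size_map size_iota.
have hD z := @coarray_fractal G _ r z hG; rewrite -hM in hD.
split=> [z | z]; last by rewrite hD.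
by rewrite /central_ula (cula_rad_interval hD) hD mem_ula.
Qed.
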